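(* Let $x,y\in\mathbb{R}^d$ with $\lVert x\rVert=\lVert y\rVert=1$, and let $\epsilon\in\mathbb{R}$ with $\lVert x-y\rVert\le\epsilon$. Then for every $c\in\{0,\dots,k-1\}$, $$\lvert P(\hat c_y=c)-P(\hat c_x=c)\rvert\le d\,(\epsilon^2+2\epsilon).$$
   Context: Setting. We use the following notation. - $D\ge 0$ and $K\ge 0$ are integers. Put $d=2^D$, $k'=2^K$ and $n=2^{D+K}$. The number of classes $k$ satisfies $1\le k\le k'$. - $U\in\mathbb{C}^{n\times n}$ is a fixed unitary matrix, and $\lVert\cdot\rVert$ is the Euclidean norm. - All indices start at $0$. - For a unit vector $x\in\mathbb{R}^d$, let $v=U(x\otimes e_0)$, where $e_0\in\mathbb{C}^{k'}$ is the first standard basis vector. Thus $(x\otimes e_0)_{k's}=x_s$ and all other entries of $x\otimes e_0$ are $0$. - For $c\in\{0,\dots,k-1\}$, define $P(\hat c_x=c)=\sum_{t=0}^{d-1}\lvert v_{k't+c}\rvert^2$, and likewise for $y$. *)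

(* R : rcfType (generalizes the real numbers), C = R[i]. *)
From HB Require Import structures.
From mathcomp Require Import all_boot all_order all_algebra.
From mathcomp Require Import complex.
Set Implicit Arguments. Unset Strict Implicit. Unset Printing Implicit Defensive.
Import Order.TTheory GRing.Theory Num.Theory.
Local Open Scope ring_scope.

Definition cnorm2 (R : rcfType) (z : R[i]) : R := (complex.Re z) ^+ 2 + (complex.Im z) ^+ 2.

Definition vnorm (R : rcfType) (d : nat) (x : 'cV[R]_d) : R :=
  Num.sqrt (\sum_(s < d) x s 0 ^+ 2).

Definition adjmx (R : rcfType) (m n : nat) (A : 'M[R[i]]_(m, n)) : 'M[R[i]]_(n, m) :=
  (map_mx (@conjc R) A)^T.

Definition unitary (R : rcfType) (n : nat) (U : 'M[R[i]]_n) : Prop :=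
  adjmx U *m U = 1%:M.

(* x (x) e_0 in C^(d*k'), with (x (x) e_0)_(k' s) = x_s, all other entries 0 *)
Definition tens_e0 (R : rcfType) (D K : nat) (x : 'cV[R]_(2 ^ D)) : 'cV[R[i]]_(2 ^ (D + K)) :=
  \col_(i < 2 ^ (D + K))
     \sum_(s < 2 ^ D) (if val i == (2 ^ K * s)%N then (x s 0)%:C else 0)%C.

Definition state (R : rcfType) (D K : nat) (U : 'M[R[i]]_(2 ^ (D + K)))
  (x : 'cV[R]_(2 ^ D)) : 'cV[R[i]]_(2 ^ (D + K)) := U *m tens_e0 K x.

(* P(c_hat_x = c) = sum_{t < d} |v_(k' t + c)|^2 *)
Definition Pclass (R : rcfType) (D K : nat) (U : 'M[R[i]]_(2 ^ (D + K)))
  (x : 'cV[R]_(2 ^ D)) (c : nat) : R :=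
  \sum_(t < 2 ^ D) \sum_(j < 2 ^ (D + K) | val j == (2 ^ K * t + c)%N)
     cnorm2 (state U x j 0).

From HB Require Import structures.
From mathcomp Require Import all_boot all_order all_algebra.
From mathcomp Require Import complex.
From mathcomp Require Import ring lra.
Set Implicit Arguments. Unset Strict Implicit. Unset Printing Implicit Defensive.
Import Order.TTheory GRing.Theory Num.Theory.
Local Open Scope ring_scope.

(** The map x |-> U (x (x) e_0) is linear and, U being unitary, preserves the
    Euclidean norm.  Hence v_x = v_y + v_(x-y) with every entry of v_y of
    modulus at most 1 and every entry of v_(x-y) of modulus at most eps, so
    each |v_x j|^2 differs from |v_y j|^2 by at most eps^2 + 2 eps
    (Cauchy-Schwarz on the cross term).  The class probability sums d such
    entries, one for each t. *)

Definition csqnorm (R : rcfType) (n : nat) (z : 'cV[R[i]]_n) : R :=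
  \sum_(j < n) cnorm2 (z j 0).

Section ComplexModulus.
Variable R : rcfType.
Implicit Types (a b : R[i]) (r e : R).

Lemma cnorm2_ge0 a : 0 <= cnorm2 a.
Proof. by rewrite addr_ge0 ?sqr_ge0. Qed.

Lemma cnorm2_real r : cnorm2 (r%:C)%C = r ^+ 2.
Proof. by rewrite /cnorm2 /= expr0n addr0. Qed.

Lemma Re_conjc_mul a : complex.Re (conjc a * a) = cnorm2 a.
Proof. by case: a => a1 a2; rewrite /cnorm2 /=; ring. Qed.

Lemma cnorm2D_perturb a b r e : 0 <= r -> 0 <= e ->
  cnorm2 a <= r ^+ 2 -> cnorm2 b <= e ^+ 2 ->
  `|cnorm2 (a + b) - cnorm2 a| <= e ^+ 2 + 2 * r * e.
Proof.
case: a b => [a1 a2] [b1 b2] r_ge0 e_ge0; rewrite /cnorm2 /= => ha hb.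
set p := a1 * b1 + a2 * b2.
have -> : (a1 + b1) ^+ 2 + (a2 + b2) ^+ 2 - (a1 ^+ 2 + a2 ^+ 2)
          = 2 * p + (b1 ^+ 2 + b2 ^+ 2) by rewrite /p; ring.
have lagrange : p ^+ 2 + (a1 * b2 - a2 * b1) ^+ 2
                = (a1 ^+ 2 + a2 ^+ 2) * (b1 ^+ 2 + b2 ^+ 2) by rewrite /p; ring.
have p2_le : p ^+ 2 <= (r * e) ^+ 2.
  rewrite exprMn; apply: le_trans (_ : _ <= (a1 ^+ 2 + a2 ^+ 2) * (b1 ^+ 2 + b2 ^+ 2)) _.
    by rewrite -lagrange lerDl sqr_ge0.
  by rewrite ler_pM ?addr_ge0 ?sqr_ge0.
have /andP[p_ge p_le] : - (r * e) <= p <= r * e.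
  by rewrite -ler_norml -(ler_pXn2r (_ : 0 < 2)%N) ?nnegrE ?mulr_ge0 // real_normK ?num_real.
have b_ge0 : 0 <= b1 ^+ 2 + b2 ^+ 2 by rewrite addr_ge0 ?sqr_ge0.
by rewrite ler_norml; apply/andP; split; lra.
Qed.

End ComplexModulus.

Section Isometry.
Variable R : rcfType.

Lemma csqnormE n (z : 'cV[R[i]]_n) : csqnorm z = complex.Re ((adjmx z *m z) 0 0).
Proof.
rewrite !mxE raddf_sum; apply: eq_bigr => j _.
by rewrite !mxE; apply/esym/Re_conjc_mul.
Qed.

Lemma cnorm2_le_csqnorm n (z : 'cV[R[i]]_n) j : cnorm2 (z j 0) <= csqnorm z.
Proof. by rewrite /csqnorm (bigD1 j) //= lerDl sumr_ge0 // => i _; apply: cnorm2_ge0. Qed.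

Lemma csqnorm_unitary n (U : 'M[R[i]]_n) (z : 'cV[R[i]]_n) :
  unitary U -> csqnorm (U *m z) = csqnorm z.
Proof.
move=> unitU; rewrite !csqnormE /adjmx map_mxM trmx_mul -mulmxA (mulmxA _ U).
by rewrite -/(adjmx U) unitU mul1mx.
Qed.

End Isometry.

Lemma sum_map_fiber (V : zmodType) (W : nmodType) (I J : finType) (f : I -> J)
    (G : V -> W) (z : I -> V) :
  injective f -> G 0 = 0 ->
  \sum_(j : J) G (\sum_(i | f i == j) z i) = \sum_(i : I) G (z i).
Proof.
move=> f_inj G0; rewrite [RHS](partition_big f xpredT) //=; apply: eq_bigr => j _.
have [i fi_j | no_i] := pickP (fun i => f i == j).
  have fiber1 : (fun k => f k == j) =1 pred1 i.
    by move=> k /=; rewrite -(eqP fi_j) (inj_eq f_inj).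
  by rewrite !(big_pred1 i).
by rewrite !big_pred0.
Qed.

Section Embedding.
Variables (R : rcfType) (D K : nat).

Lemma slot_subproof (s : 'I_(2 ^ D)) : (2 ^ K * s < 2 ^ (D + K))%N.
Proof. by rewrite expnD mulnC ltn_pmul2r ?expn_gt0. Qed.

Definition slot (s : 'I_(2 ^ D)) : 'I_(2 ^ (D + K)) := Ordinal (slot_subproof s).

Lemma slot_inj : injective slot.
Proof. by move=> s t /(congr1 val)/eqP; rewrite /= eqn_pmul2l ?expn_gt0 // => /eqP/val_inj. Qed.

Lemma tens_e0E (a : 'cV[R]_(2 ^ D)) j :
  tens_e0 K a j 0 = \sum_(s | slot s == j) (a s 0)%:C%C.
Proof. by rewrite mxE [RHS]big_mkcond; apply: eq_bigr => s _; rewrite eq_sym. Qed.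

Lemma tens_e0B (a b : 'cV[R]_(2 ^ D)) :
  tens_e0 K (a - b) = tens_e0 K a - tens_e0 K b.
Proof.
apply/matrixP => j k; rewrite !mxE -sumrB; apply: eq_bigr => s _.
by case: ifP; rewrite ?subr0 // !mxE raddfB.
Qed.

Lemma csqnorm_tens_e0 (a : 'cV[R]_(2 ^ D)) : csqnorm (tens_e0 K a) = vnorm a ^+ 2.
Proof.
rewrite /csqnorm; under eq_bigr do rewrite tens_e0E.
rewrite sum_map_fiber; [|exact: slot_inj|by rewrite /cnorm2 /= expr0n addr0].
under eq_bigr do rewrite cnorm2_real.
by rewrite sqr_sqrtr // sumr_ge0 // => s _; apply: sqr_ge0.
Qed.

Lemma stateB (U : 'M[R[i]]_(2 ^ (D + K))) (a b : 'cV[R]_(2 ^ D)) :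
  state U (a - b) = state U a - state U b.
Proof. by rewrite /state tens_e0B mulmxBr. Qed.

Lemma csqnorm_state (U : 'M[R[i]]_(2 ^ (D + K))) (a : 'cV[R]_(2 ^ D)) :
  unitary U -> csqnorm (state U a) = vnorm a ^+ 2.
Proof. by move=> unitU; rewrite /state csqnorm_unitary // csqnorm_tens_e0. Qed.

End Embedding.

Lemma norm_sum_ord_eq_le (R : numDomainType) n m (F : 'I_n -> R) b :
  0 <= b -> (forall j, `|F j| <= b) -> `|\sum_(j < n | val j == m) F j| <= b.
Proof.
move=> b_ge0 Fb; have [lt_mn | le_nm] := ltnP m n.
  by rewrite (big_pred1 (Ordinal lt_mn)) // => j; rewrite /= -val_eqE.
by rewrite big_pred0 ?normr0 // => j /=; apply: contra_leqF le_nm => /eqP <-.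
Qed.

Theorem lemma2 (R : rcfType) (D K k : nat) (U : 'M[R[i]]_(2 ^ (D + K)))
  (x y : 'cV[R]_(2 ^ D)) (eps : R) :
  (1 <= k)%N -> (k <= 2 ^ K)%N ->
  unitary U ->
  vnorm x = 1 -> vnorm y = 1 -> vnorm (x - y) <= eps ->
  forall c : nat, (c < k)%N ->
  `|Pclass U y c - Pclass U x c| <= (2 ^ D)%:R * (eps ^+ 2 + 2 * eps).
Proof.
(* The bound holds entrywise. *)
move=> _ _ unitU x1 y1 xy_le c _.
have eps_ge0 : 0 <= eps by apply: le_trans xy_le; apply: sqrtr_ge0.
have entry j :
    `|cnorm2 (state U y j 0) - cnorm2 (state U x j 0)| <= eps ^+ 2 + 2 * eps.
  have -> : state U x = state U y + state U (x - y) by rewrite stateB addrC subrK.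
  rewrite [(state U y + _) j 0]mxE distrC -(mulr1 (2 : R)); apply: cnorm2D_perturb => //.
    by apply: le_trans (cnorm2_le_csqnorm _ j) _; rewrite csqnorm_state // y1.
  apply: le_trans (cnorm2_le_csqnorm _ j) _.
  by rewrite csqnorm_state // ler_pXn2r ?nnegrE ?sqrtr_ge0.
have -> : (2 ^ D)%:R * (eps ^+ 2 + 2 * eps) = \sum_(t < 2 ^ D) (eps ^+ 2 + 2 * eps).
  by rewrite sumr_const card_ord mulr_natl.
rewrite /Pclass -sumrB (le_trans (ler_norm_sum _ _ _)) // ler_sum // => t _.
by rewrite -sumrB norm_sum_ord_eq_le ?addr_ge0 ?sqr_ge0 ?mulr_ge0.
Qed.
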